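(* Let $k\ge 2$ and $X=J(2k,k,1)\cup J(2k,k,2)\cup\cdots\cup J(2k,k,k-1)$. If $\binom{2k}{k}\equiv 0\pmod 4$, then for every vertex $A$ of $X$ there is perfect state transfer from $A$ to $\{1,\ldots,2k\}\setminus A$ at time $\pi/2$.
   Context: $J(2k,k,i)$ is the graph on the $k$-subsets of $\{1,\ldots,2k\}$ with $A\sim B$ iff $|A\cap B|=i$; the union of several such graphs is the graph on the same vertex set whose edge set is the union of their edge sets. For a simple graph $X$ with adjacency matrix $A$, let $\mathcal{H}_X(t)=e^{itA}$; there is perfect state transfer from $u$ to $v\ne u$ at time $\tau$ if $|\mathcal{H}_X(\tau)_{u,v}|=1$. *)

From Stdlib Require Import Reals Factorial.
From mathcomp Require Import all_boot.
Set Implicit Arguments. Unset Strict Implicit. Unset Printing Implicit Defensive.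

(* Vertices of J(2k,k,i): the k-subsets of {1,...,2k} (modelled as 'I_(2k)). *)
Definition vert (k : nat) := {A : {set 'I_(2 * k)} | #|A| == k}.

(* Adjacency in X = J(2k,k,1) u ... u J(2k,k,k-1): 1 <= |A n B| <= k-1. *)
Definition adjX (k : nat) (A B : vert k) : bool :=
  (0 < #|val A :&: val B|) && (#|val A :&: val B| < k).

(* walks k m u v = (A^m)_{u,v}, A the adjacency matrix of X. *)
Fixpoint walks (k m : nat) (u v : vert k) {struct m} : nat :=
  match m with
  | 0 => nat_of_bool (u == v)
  | m'.+1 => \sum_(w : vert k) nat_of_bool (adjX u w) * @walks k m' w v
  end.

Open Scope R_scope.

Definition ipow_re (n : nat) : R :=
  match (n mod 4)%nat with 0%nat => 1 | 2%nat => -1 | _ => 0 end.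
Definition ipow_im (n : nat) : R :=
  match (n mod 4)%nat with 1%nat => 1 | 3%nat => -1 | _ => 0 end.

(* H_X(t)_{u,v} = (e^{itA})_{u,v} = sum_n (it)^n (A^n)_{u,v} / n!,
   given by its real part re and imaginary part im. *)
Definition transition_entry (k : nat) (t : R) (u v : vert k) (re im : R) : Prop :=
  infinite_sum (fun n => ipow_re n * t ^ n / INR (fact n) * INR (@walks k n u v)) re /\
  infinite_sum (fun n => ipow_im n * t ^ n / INR (fact n) * INR (@walks k n u v)) im.

Definition pst (k : nat) (u v : vert k) (t : R) : Prop :=
  u <> v /\ exists re im, @transition_entry k t u v re im /\ re ^ 2 + im ^ 2 = 1.

From Stdlib Require Import Reals Factorial Lra.
From Coquelicot Require Import Coquelicot.
From mathcomp Require Import all_boot all_algebra Rstruct.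
From mathcomp Require ring.
Set Implicit Arguments. Unset Strict Implicit. Unset Printing Implicit Defensive.

(* Two k-subsets meet in 0 elements iff they are complementary and in k elements iff
   they are equal, so X is the complete graph on the N = C(2k,k) vertices minus the
   perfect matching A ~ Ac, and its adjacency matrix is J - I - P, with P the
   permutation matrix of complementation.  The eigenvalues are N - 2, -2 and 0, and
   (A^n)_{A,Ac} = (N-2)^n / N + (N-2)/(2N) (-2)^n - 0^n / 2.  Summing the
   exponential series, H_X(t)_{A,Ac} = e^{i(N-2)t} / N + (N-2)/(2N) e^{-2it} - 1/2;
   at t = pi/2 with 4 | N both exponentials equal -1, so the entry is -1. *)

Lemma mod4_cases (P : nat -> Prop) n :
  P 0%nat -> P 1%nat -> P 2%nat -> P 3%nat -> P (n mod 4)%nat.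
Proof.
have : (n mod 4 < 4)%coq_nat by apply: Nat.mod_upper_bound.
by case: (n mod 4)%nat => [|[|[|[|r]]]] // /ltP.
Qed.

Lemma ipow_re_add2 n : ipow_re (n + 2) = - ipow_re n.
Proof.
rewrite /ipow_re Nat.Div0.add_mod.
by elim/mod4_cases: (n mod 4)%nat => /=; lra.
Qed.

Lemma ipow_im_add2 n : ipow_im (n + 2) = - ipow_im n.
Proof.
rewrite /ipow_im Nat.Div0.add_mod.
by elim/mod4_cases: (n mod 4)%nat => /=; lra.
Qed.

Lemma ipow_even n : ipow_re (2 * n) = (-1) ^ n /\ ipow_im (2 * n) = 0.
Proof.
elim: n => [|n [IHre IHim]]; first by split.
rewrite mulnS addnC ipow_re_add2 ipow_im_add2 IHre IHim /=; split; lra.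
Qed.

Lemma ipow_odd n : ipow_re (2 * n + 1) = 0 /\ ipow_im (2 * n + 1) = (-1) ^ n.
Proof.
elim: n => [|n [IHre IHim]]; first by split.
rewrite mulnS -addnA addnC.
rewrite ipow_re_add2 ipow_im_add2 IHre IHim /=; split; lra.
Qed.

Lemma is_series_0 : is_series (fun _ : nat => 0) 0.
Proof.
apply: (filterlim_ext (fun _ => 0)); last exact: filterlim_const.
by move=> n; rewrite sum_n_const Rmult_0_r.
Qed.

Lemma cos_series x : is_series (fun n => ipow_re n * x ^ n / INR (fact n)) (cos x).
Proof.
pose a n := ipow_re n / INR (fact n).
have : is_pseries a x (cos x + x * 0).
  apply: is_pseries_odd_even; apply/is_pseries_R.
  - rewrite /cos; case: exist_cos => l /is_series_Reals.
    apply: is_series_ext => n.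
    by rewrite /a /cos_n (ipow_even n).1 -Rsqr_pow2.
  - apply: is_series_ext is_series_0 => n.
    by rewrite /a (ipow_odd n).1 /Rdiv !Rmult_0_l.
rewrite Rmult_0_r Rplus_0_r => /is_pseries_R.
apply: is_series_ext => n; rewrite /a /=; field; exact: INR_fact_neq_0.
Qed.

Lemma sin_series x : is_series (fun n => ipow_im n * x ^ n / INR (fact n)) (sin x).
Proof.
pose a n := ipow_im n / INR (fact n).
rewrite /sin; case: exist_sin => l Hl.
have : is_pseries a x (0 + x * l).
  apply: is_pseries_odd_even; apply/is_pseries_R.
  - apply: is_series_ext is_series_0 => n.
    by rewrite /a (ipow_even n).2 /Rdiv !Rmult_0_l.
  - move/is_series_Reals: Hl; apply: is_series_ext => n.
    by rewrite /a /sin_n (ipow_odd n).2 -Rsqr_pow2.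
rewrite Rplus_0_l => /is_pseries_R.
apply: is_series_ext => n; rewrite /a /=; field; exact: INR_fact_neq_0.
Qed.

Lemma is_series_power_sum (a : nat -> R) (g : R -> R) (t : R) (s : seq (R * R)) :
  (forall x, is_series (fun n => a n * x ^ n / INR (fact n)) (g x)) ->
  is_series (fun n => a n * t ^ n / INR (fact n) * \big[Rplus/0]_(p <- s) (p.1 * p.2 ^ n))
            (\big[Rplus/0]_(p <- s) (p.1 * g (p.2 * t))).
Proof.
move=> g_series; elim: s => [|[c l] s IHs].
  by rewrite big_nil; apply: is_series_ext is_series_0 => n; rewrite big_nil Rmult_0_r.
have := is_series_plus _ _ _ _ (is_series_scal_l c _ _ (g_series (l * t))) IHs.
rewrite big_cons; apply: is_series_ext => n.
by rewrite big_cons /= Rpow_mult_distr /plus /scal /= /mult /= /Rdiv; ring.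
Qed.

Lemma transition_entry_power_sum k t (u v : vert k) (s : seq (R * R)) :
  (forall n, INR (walks n u v) = \big[Rplus/0]_(p <- s) (p.1 * p.2 ^ n)) ->
  transition_entry t u v (\big[Rplus/0]_(p <- s) (p.1 * cos (p.2 * t)))
                         (\big[Rplus/0]_(p <- s) (p.1 * sin (p.2 * t))).
Proof.
move=> walksE; split; apply/is_series_Reals.
  apply: is_series_ext (is_series_power_sum (t := t) (s := s) cos_series) => n.
  by rewrite walksE.
apply: is_series_ext (is_series_power_sum (t := t) (s := s) sin_series) => n.
by rewrite walksE.
Qed.

Fixpoint nwalks (T : finType) (e : rel T) (n : nat) (u v : T) : nat :=
  if n is m.+1 then \sum_(w : T) e u w * nwalks e m w v else u == v.

Section CocktailPartyWalks.
Import GRing.Theory ring.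
Local Open Scope ring_scope.

Variables (T : finType) (c : T -> T) (e : rel T).
Hypotheses (cK : involutive c) (c_neq : forall u, c u != u).
Hypothesis eE : forall u w, e u w = (w != u) && (w != c u).
Variable R : comNzRingType.

Local Notation N := (#|T|%:R : R).

Lemma sum_indicator_mul (f : T -> R) (v : T) : \sum_w (w == v)%:R * f w = f v.
Proof. by rewrite (bigD1 v) //= eqxx mul1r big1 ?addr0 // => w /negPf ->; rewrite mul0r. Qed.

Lemma sum_indicator (v : T) : \sum_w (w == v)%:R = 1 :> R.
Proof.
by rewrite (eq_bigr (fun w => (w == v)%:R * 1)) ?sum_indicator_mul // => w _; rewrite mulr1.
Qed.

Lemma sum_antipode_indicator (v : T) : \sum_w (c w == v)%:R = 1 :> R.
Proof.
rewrite (reindex_inj (inv_inj cK)) -[RHS](sum_indicator v).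
by apply: eq_bigr => w _; rewrite cK.
Qed.

Lemma adj_indicator (u w : T) : (e u w)%:R = 1 - (w == u)%:R - (w == c u)%:R :> R.
Proof.
rewrite eE; have [->|_] := eqVneq w u.
  by rewrite eq_sym (negPf (c_neq u)) /=; ring.
by have [_|_] := eqVneq w (c u); rewrite /=; ring.
Qed.

Lemma sum_adjacent (f : T -> R) (u : T) :
  \sum_w (e u w)%:R * f w = \sum_w f w - f u - f (c u).
Proof.
under eq_bigr do rewrite adj_indicator !mulrBl mul1r.
by rewrite !sumrB !sum_indicator_mul.
Qed.

Lemma nwalksE n (u v : T) :
  (nwalks e n u v)%:R * (2 * N) =
    2 * ((N - 2) ^+ n - (-2) ^+ n) + N * ((-2) ^+ n + 0 ^+ n) * (u == v)%:R
    + N * ((-2) ^+ n - 0 ^+ n) * (c u == v)%:R.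
Proof.
elim: n u v => [|n IHn] u v; first by rewrite /= !expr0; ring.
rewrite /= natr_sum mulr_suml.
under eq_bigr => w _ do rewrite natrM -mulrA IHn.
rewrite sum_adjacent cK !big_split /= -!mulr_sumr sum_antipode_indicator.
rewrite sum_indicator sumr_const -mulr_natr !exprS.
ring.
Qed.

End CocktailPartyWalks.

Section Vertices.
Variable k : nat.
Implicit Types A B : vert k.

Lemma card_vert : #|{: vert k}| = 'C(2 * k, k).
Proof. by rewrite card_sig -cardsE card_draws card_ord. Qed.

Lemma card_setC_vert A : #|~: val A| == k.
Proof. by rewrite cardsCs card_ord setCK (eqP (valP A)) mul2n -addnn addnK. Qed.

Definition vcompl A : vert k := exist _ (~: val A) (card_setC_vert A).

Lemma vcomplK : involutive vcompl.
Proof. by move=> A; apply: val_inj; rewrite /= setCK. Qed.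

Lemma vcompl_neq A : (0 < k)%N -> vcompl A != A.
Proof.
move=> k_gt0; apply/eqP => /(congr1 val) /= AC.
have : sval A :&: sval A = set0 by rewrite -{2}AC setICr.
rewrite setIid => /eqP; rewrite -cards_eq0 (eqP (valP A)).
exact/negP/lt0n_neq0.
Qed.

Lemma subset_vertE A B : (val A \subset val B) = (A == B).
Proof.
apply/idP/eqP => [sAB|->//].
by apply/val_inj/eqP; rewrite eqEcard sAB (eqP (valP A)) (eqP (valP B)) leqnn.
Qed.

Lemma adjXE A B : adjX A B = (B != A) && (B != vcompl A).
Proof.
rewrite /adjX andbC lt0n cards_eq0 setIC setI_eq0 disjoints_subset.
have -> : (#|val B :&: val A| < k)%N = ~~ (val B \subset val A).
  rewrite -[X in (_ < X)%N](eqP (valP B)) -(andTb (_ < _)%N).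
  by rewrite -(subsetIl (val B) (val A)) -properEcard properE subsetIl subsetI subxx.
by rewrite subset_vertE -[~: val A]/(val (vcompl A)) subset_vertE.
Qed.

Lemma walks_nwalks n A B : walks n A B = nwalks (@adjX k) n A B.
Proof. by elim: n A B => //= n IHn A B; apply: eq_bigr => w _; rewrite IHn. Qed.

End Vertices.

(* The eigenvalues N - 2, -2, 0 of J - I - P, each paired with the (A, Ac) entry of
   the projection onto its eigenspace. *)
Definition antipodal_terms (N : R) : seq (R * R) :=
  [:: (1 / N, N - 2); ((N - 2) / (2 * N), -2); (-1 / 2, 0)].

Section AntipodalWalks.
Import GRing.Theory Num.Theory ring.
Variable k : nat.
Hypothesis k_gt0 : (0 < k)%N.

Lemma walks_compl_power_sum (A : vert k) n :
  INR (walks n A (vcompl A)) =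
    \big[Rplus/0]_(p <- antipodal_terms (INR 'C(2 * k, k))) (p.1 * p.2 ^ n).
Proof.
have := nwalksE (@vcomplK k) (@vcompl_neq k ^~ k_gt0) (@adjXE k) R n A (vcompl A).
rewrite -walks_nwalks card_vert eqxx eq_sym (negPf (vcompl_neq A k_gt0)) /= => walksE.
have N_neq0 : ('C(2 * k, k)%:R != 0 :> R)%R by rewrite pnatr_eq0 -lt0n bin_gt0 leq_pmull.
have two_neq0 : (2 != 0 :> R)%R by rewrite pnatr_eq0.
rewrite !big_cons big_nil /= !IZR_NEG !RealsE /=.
by apply: (mulIf (mulf_neq0 two_neq0 N_neq0)); rewrite walksE; field.
Qed.

End AntipodalWalks.

Lemma cos_sin_half_turn (x : R) (j : nat) :
  x = 4 * INR j - 2 -> cos (x * (PI / 2)) = -1 /\ sin (x * (PI / 2)) = 0.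
Proof.
move=> ->; rewrite (_ : (4 * INR j - 2) * (PI / 2) = - PI + 2 * INR j * PI); last by field.
by rewrite cos_period sin_period cos_neg sin_neg cos_PI sin_PI Ropp_0.
Qed.

Theorem mainTheorem18 (k : nat) (hk : (2 <= k)%N) (hbin : ('C(2 * k, k) %% 4)%N = 0%N)
  (A B : vert k) (hB : val B = ~: val A) :
  pst A B (PI / 2)%R.
Proof.
have k_gt0 : (0 < k)%N := ltnW hk.
have -> : (PI / 2)%R = PI / 2 by rewrite RdivE IZRposE INRE.
have -> : B = vcompl A by apply: val_inj.
split; first by apply/eqP; rewrite eq_sym vcompl_neq.
set N := INR 'C(2 * k, k).
have N_neq0 : N <> 0 by apply/not_0_INR/eqP; rewrite -lt0n bin_gt0 leq_pmull.
have /dvdnP [j Cj] : (4 %| 'C(2 * k, k))%N by rewrite /dvdn hbin.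
have N2 : N - 2 = 4 * INR j - 2 by rewrite /N Cj mulnC -multE mult_INR (INR_IZR_INZ 4).
have minus2 : -2 = 4 * INR 0 - 2 by rewrite INR_0; ring.
have [cosN sinN] := cos_sin_half_turn N2.
have [cos2 sin2] := cos_sin_half_turn minus2.
eexists; eexists; split.
  by apply: transition_entry_power_sum => n; apply: walks_compl_power_sum.
rewrite !big_cons !big_nil /= cosN sinN cos2 sin2 Rmult_0_l cos_0 sin_0.
by field.
Qed.
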